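(* Let $\Delta$ be a finite set of defaults such that $\Delta^\rightarrow$ is consistent, and suppose $\Delta$ has Z-partition $(\Delta_0,\ldots,\Delta_n)$. Then for all $\theta,\phi\in L$: $\theta\mid\!\sim^\Delta_{lex}\phi$ if and only if $\phi\in Bel\big((\cdots((\preceq_\emptyset*\preceq_{\Delta^\rightarrow_0})*\preceq_{\Delta^\rightarrow_1})*\cdots*\preceq_{\Delta^\rightarrow_n})*\preceq_{\{\theta\}}\big)$.
   Context: $L$ is a propositional language built from a finite set of propositional variables with the connectives $\neg,\wedge,\vee,\rightarrow,\top,\bot$; $W$ is the finite set of propositional worlds. For $\theta\in L$, $S_\theta=\{w\in W\mid w\models\theta\}$; $E\models\phi$ means $\bigcap_{\theta\in E}S_\theta\subseteq S_\phi$; $\models\phi$ means $\emptyset\models\phi$; $E$ is consistent iff $E\not\models\bot$. Defaults: expressions $\lambda\Rightarrow\chi$ with $\lambda,\chi\in L$; for a set $\Gamma$ of defaults $\Gamma^\rightarrow=\{\lambda\rightarrow\chi\mid\lambda\Rightarrow\chi\in\Gamma\}$. $\lambda\Rightarrow\chi$ is tolerated by $\Gamma$ iff $\{\lambda\wedge\chi\}\cup\Gamma^\rightarrow$ is consistent. Z-partition of $\Delta$: $\Delta_0$ is the set of defaults of $\Delta$ tolerated by $\Delta$; for $i\ge1$, $\Delta_i$ is the set of defaults of $\Delta\setminus(\Delta_0\cup\cdots\cup\Delta_{i-1})$ tolerated by $\Delta\setminus(\Delta_0\cup\cdots\cup\Delta_{i-1})$; stop at the first $n$ with $\Delta_0\cup\cdots\cup\Delta_n=\Delta$.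 Lexicographic closure: for $A,B\subseteq\Delta$, with $A_i=A\cap\Delta_i$, $B_i=B\cap\Delta_i$, $A\ll_{lex}B$ iff there is $i$ with $|A_i|<|B_i|$ and $|A_j|=|B_j|$ for all $j>i$. $\theta\mid\!\sim^\Delta_{lex}\phi$ iff for every $\Gamma\subseteq\Delta$ such that $\Gamma^\rightarrow\cup\{\theta\}$ is consistent and $\Gamma$ is $\ll_{lex}$-maximal among such subsets, $\Gamma^\rightarrow\cup\{\theta\}\models\phi$. E-relation: a relation $\preceq\subseteq L\times L$ such that for all $\theta,\phi,\psi$: (E1) transitivity; (E2) $\theta\models\phi$ implies $\theta\preceq\phi$; (E3) $\theta\preceq\theta\wedge\phi$ or $\phi\preceq\theta\wedge\phi$; (E4) if $\bot\prec\psi$ for some $\psi$, then $\theta\preceq\phi$ for all $\theta$ implies $\models\phi$; $\prec$ is the strict part. $Bel(\preceq)=\{\theta\mid\bot\prec\theta\}$ if $\bot\prec\theta$ for some $\theta$, else $Bel(\preceq)=L$. Sequences: finite sequences $\vec{\mathcal U}=(\mathcal U_0,\ldots,\mathcal U_k)$ of mutually disjoint subsets of $W$ (components may be empty, possibly repeatedly). $\mathrm{rank}^{\vec{\mathcal U}}(\theta)$ is the least $i$ with $\mathcal U_i\cap S_\theta\neq\emptyset$, $\infty$ if none. $\theta\mid\!\sim_{\vec{\mathcal U}}\phi$ iff $\mathrm{rank}^{\vec{\mathcal U}}(\theta)<\mathrm{rank}^{\vec{\mathcal U}}(\theta\wedge\neg\phi)$ or $\mathrm{rank}^{\vec{\mathcal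 U}}(\theta)=\infty$. $\vec{\mathcal U}$ is full iff $\bigcup_i\mathcal U_i=W$, empty iff $\bigcup_i\mathcal U_i=\emptyset$; $\Upsilon$ is the set of full or empty sequences. For $\vec{\mathcal U}\in\Upsilon$, $\theta\preceq_{\vec{\mathcal U}}\phi$ iff (not $\neg\theta\vee\neg\phi\mid\!\sim_{\vec{\mathcal U}}\theta$) or $\neg\phi\mid\!\sim_{\vec{\mathcal U}}\bot$. Sequence revision: if $\vec{\mathcal U}$ is full, $\vec{\mathcal U}*\vec{\mathcal V}=(\mathcal U_0\cap\mathcal V_0,\ldots,\mathcal U_k\cap\mathcal V_0,\ \ldots,\ \mathcal U_0\cap\mathcal V_m,\ldots,\mathcal U_k\cap\mathcal V_m)$ for $\vec{\mathcal V}=(\mathcal V_0,\ldots,\mathcal V_m)$; otherwise $\vec{\mathcal U}*\vec{\mathcal V}=\vec{\mathcal V}$. Revision of E-relations: every E-relation equals $\preceq_{\vec{\mathcal U}}$ for some $\vec{\mathcal U}\in\Upsilon$, and $\preceq_K*\preceq_E:=\preceq_{\vec{\mathcal U}*\vec{\mathcal V}}$ for any $\vec{\mathcal U},\vec{\mathcal V}\in\Upsilon$ with $\preceq_K=\preceq_{\vec{\mathcal U}}$, $\preceq_E=\preceq_{\vec{\mathcal V}}$ (independent of the choice). Relation generated by a finite set $E\subseteq L$: $\theta\prec_E\phi$ iff $E\not\models\bot$, $\not\models\theta$, and for every $E'\subseteq E$ with $E'\cup\{\neg\phi\}$ consistent there is $E''\subseteq E$ with $|E'|<|E''|$ and $E''\cup\{\neg\theta\}$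 consistent; $\theta\preceq_E\phi$ iff not $\phi\prec_E\theta$. ($\preceq_E$ is an E-relation.) *)

From HB Require Import structures.
From mathcomp Require Import all_boot.
From mathcomp Require Import finmap.

Set Implicit Arguments.
Unset Strict Implicit.
Unset Printing Implicit Defensive.

Local Open Scope fset_scope.

Section Logic.
Variable V : finType.

Inductive form : Type :=
  | Var of V
  | Neg of form
  | And of form & form
  | Or  of form & form
  | Imp of form & form
  | Top
  | Bot.

Fixpoint form_enc (f : form) : GenTree.tree V :=
  match f with
  | Var v => GenTree.Leaf v
  | Neg a => GenTree.Node 0 [:: form_enc a]
  | And a b => GenTree.Node 1 [:: form_enc a; form_enc b]
  | Or a b => GenTree.Node 2 [:: form_enc a; form_enc b]
  | Imp a b => GenTree.Node 3 [:: form_enc a; form_enc b]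
  | Top => GenTree.Node 4 [::]
  | Bot => GenTree.Node 5 [::]
  end.

Fixpoint form_dec (t : GenTree.tree V) : option form :=
  match t with
  | GenTree.Leaf v => Some (Var v)
  | GenTree.Node 0 [:: a] => omap Neg (form_dec a)
  | GenTree.Node 1 [:: a; b] =>
      if form_dec a is Some x then omap (And x) (form_dec b) else None
  | GenTree.Node 2 [:: a; b] =>
      if form_dec a is Some x then omap (Or x) (form_dec b) else None
  | GenTree.Node 3 [:: a; b] =>
      if form_dec a is Some x then omap (Imp x) (form_dec b) else None
  | GenTree.Node 4 [::] => Some Top
  | GenTree.Node 5 [::] => Some Bot
  | _ => None
  end.

Lemma form_encK : pcancel form_enc form_dec.
Proof. by elim=> //= [a -> |a -> b ->|a -> b ->|a -> b ->]. Qed.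

HB.instance Definition _ := Countable.copy form (pcan_type form_encK).

Definition world := {ffun V -> bool}.

Fixpoint sat (w : world) (f : form) : bool :=
  match f with
  | Var v => w v
  | Neg a => ~~ sat w a
  | And a b => sat w a && sat w b
  | Or a b => sat w a || sat w b
  | Imp a b => sat w a ==> sat w b
  | Top => true
  | Bot => false
  end.

Definition Sf (f : form) : {set world} := [set w | sat w f].

Definition models (E : {fset form}) (phi : form) : bool :=
  [forall w : world, all (sat w) E ==> sat w phi].

Definition valid (phi : form) : bool := models fset0 phi.

Definition consistent (E : {fset form}) : bool := ~~ models E Bot.

(* a default  lambda => chi  is the pair (lambda, chi) *)
Definition default := (form * form)%type.

Definition imps (G : {fset default}) : {fset form} :=
  [fset Imp d.1 d.2 | d in G].

Definition tolerated (d : default) (G : {fset default}) : bool :=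
  consistent ([fset And d.1 d.2] `|` imps G).

Definition tol_part (G : {fset default}) : {fset default} :=
  [fset d in G | tolerated d G].

(* remaining defaults  Delta \ (Delta_0 u ... u Delta_{i-1}) *)
Fixpoint zrest (D : {fset default}) (i : nat) : {fset default} :=
  match i with
  | 0 => D
  | i.+1 => zrest D i `\` tol_part (zrest D i)
  end.

Definition zlayer (D : {fset default}) (i : nat) : {fset default} :=
  tol_part (zrest D i).

Fixpoint zupto (D : {fset default}) (m : nat) : {fset default} :=
  match m with
  | 0 => zlayer D 0
  | m.+1 => zupto D m `|` zlayer D m.+1
  end.

Definition is_zpartition (D : {fset default}) (n : nat) : Prop :=
  zupto D n = D /\ (forall m, m < n -> zupto D m <> D).

Definition lexlt (D : {fset default}) (n : nat) (A B : {fset default}) : Prop :=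
  exists i, i <= n /\
    #|` A `&` zlayer D i| < #|` B `&` zlayer D i| /\
    (forall j, i < j <= n -> #|` A `&` zlayer D j| = #|` B `&` zlayer D j|).

Definition lex_entails (D : {fset default}) (n : nat) (theta phi : form) : Prop :=
  forall G : {fset default},
    G `<=` D ->
    consistent (imps G `|` [fset theta]) ->
    (forall G' : {fset default}, G' `<=` D ->
        consistent (imps G' `|` [fset theta]) -> ~ lexlt D n G G') ->
    models (imps G `|` [fset theta]) phi.

Definition erel := form -> form -> Prop.

Definition strict (R : erel) : erel := fun a b => R a b /\ ~ R b a.

Definition Bel (R : erel) (phi : form) : Prop :=
  (exists psi, strict R Bot psi) -> strict R Bot phi.

Local Close Scope fset_scope.
Definition wseq := seq {set world}.

Definition rank (U : wseq) (f : form) : option nat :=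
  if has (fun X => X :&: Sf f != set0) U
  then Some (find (fun X => X :&: Sf f != set0) U) else None.

(* strict order on nat u {infinity}, infinity = None *)
Definition ltr_inf (a b : option nat) : bool :=
  match a, b with
  | Some x, Some y => x < y
  | Some _, None => true
  | None, _ => false
  end.

Definition nm (U : wseq) (theta phi : form) : Prop :=
  ltr_inf (rank U theta) (rank U (And theta (Neg phi))) \/ rank U theta = None.

Definition mutually_disjoint (U : wseq) : Prop :=
  forall i j, i < size U -> j < size U -> i != j ->
    [disjoint nth set0 U i & nth set0 U j].

Definition full (U : wseq) : bool := \bigcup_(X <- U) X == setT.
Definition wempty (U : wseq) : bool := \bigcup_(X <- U) X == set0.

Definition Upsilon (U : wseq) : Prop :=
  0 < size U /\ mutually_disjoint U /\ (full U || wempty U).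

Definition prec_seq (U : wseq) : erel := fun theta phi =>
  ~ nm U (Or (Neg theta) (Neg phi)) theta \/ nm U (Neg phi) Bot.

Definition seq_rev (U W' : wseq) : wseq :=
  if full U then flatten [seq [seq X :&: Y | X <- U] | Y <- W'] else W'.

Definition same_rel (R S : erel) : Prop := forall a b, R a b <-> S a b.

(* revision of E-relations: R1 * R2 := prec_{U * V} for U, V in Upsilon
   with R1 = prec_U and R2 = prec_V (independent of the choice) *)
Definition Erev (R1 R2 : erel) : erel := fun theta phi =>
  exists U W', Upsilon U /\ Upsilon W' /\
    same_rel (prec_seq U) R1 /\ same_rel (prec_seq W') R2 /\
    prec_seq (seq_rev U W') theta phi.

Local Open Scope fset_scope.
Definition strict_gen (E : {fset form}) (theta phi : form) : Prop :=
  consistent E /\ ~~ valid theta /\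
  forall E' : {fset form}, E' `<=` E -> consistent (E' `|` [fset Neg phi]) ->
    exists2 E'' : {fset form}, E'' `<=` E &
      #|` E'| < #|` E''| /\ consistent (E'' `|` [fset Neg theta]).

Definition prec_gen (E : {fset form}) : erel := fun theta phi =>
  ~ strict_gen E phi theta.

Definition zrev (D : {fset default}) (n : nat) : erel :=
  foldl (fun R i => Erev R (prec_gen (imps (zlayer D i))))
        (prec_gen fset0) (iota 0 n.+1).

End Logic.

(* For a full sequence U, the relation of U is [ranked r], where r w is the
   index of the block of U containing w and [ranked r theta phi] means that some
   countermodel of theta has rank at most that of every countermodel of phi;
   empty sequences give the total relation.  Since [ranked r] determines the
   preorder induced by r, revising [ranked r1] (with r1 < N1) by [ranked r2]
   gives [ranked (r2 * N1 + r1)], the blocks U_i :&: V_j being listed with j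
   major.  The relation generated by a consistent E is ranked by the number of
   formulas of E a world violates.  Hence the iterated revision is ranked by
   the mixed-radix number whose digits, most significant first, are the
   violation counts of Delta_n->, ..., Delta_0->, and the last revision by
   theta puts the models of theta first.  Bel of a ranked relation consists of
   the formulas true in all worlds of minimal rank.  Comparing the ranks of
   models of theta amounts to comparing, lexicographically from layer n down,
   the numbers of defaults of each layer they satisfy.  So a world of minimal
   rank satisfies theta and the set of defaults it satisfies is <<lex-maximal
   among those consistent with theta, and conversely every model of theta and
   of such a maximal set has minimal rank: both sides say that phi holds in all
   worlds of minimal rank. *)

From mathcomp Require Import all_boot finmap.
From Stdlib Require Import Classical.

Set Implicit Arguments.
Unset Strict Implicit.
Unset Printing Implicit Defensive.

Local Open Scope fset_scope.
Local Open Scope nat_scope.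

Lemma find_leq_nth (T : Type) (p : pred T) x0 s i : p (nth x0 s i) -> find p s <= i.
Proof. by move=> pi; rewrite leqNgt; apply/negP => /(before_find x0); rewrite pi. Qed.

Lemma ltn_mixed_radix (N a b c d : nat) : b < N -> d < N ->
  (a * N + b < c * N + d) = (a < c) || (a == c) && (b < d).
Proof.
move=> bN dN; case: (ltngtP a c) => [ac|ca|->] /=; last by rewrite ltn_add2l.
  apply: leq_trans (leq_addr d _); apply: leq_trans (leq_mul ac (leqnn N)).
  by rewrite mulSn addnC ltn_add2r.
apply/negbTE; rewrite -leqNgt; apply/ltnW/(leq_trans _ (leq_addr b _)).
by apply: leq_trans (leq_mul ca (leqnn N)); rewrite mulSn addnC ltn_add2r.
Qed.

Definition lex_lt n (a b : nat -> nat) : Prop :=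
  exists i, i <= n /\ a i < b i /\ (forall j, i < j <= n -> a j = b j).

Lemma lex_lt0 a b : lex_lt 0 a b <-> a 0 < b 0.
Proof.
split=> [[i [+ [+ _]]]|ab]; first by rewrite leqn0 => /eqP ->.
by exists 0; split=> //; split=> // j /andP[/leq_trans h/h].
Qed.

Lemma lex_ltS n a b :
  lex_lt n.+1 a b <-> a n.+1 < b n.+1 \/ (a n.+1 = b n.+1 /\ lex_lt n a b).
Proof.
split=> [[i [+ [ab abeq]]]|[ab|[abeq [i [iN [ab abeq']]]]]].
- rewrite leq_eqVlt => /orP[/eqP ei|iN]; first by left; rewrite -ei.
  right; split; first by apply: abeq; rewrite iN leqnn.
  by exists i; split=> //; split=> // j /andP[ij jN]; apply: abeq; rewrite ij leqW.
- by exists n.+1; split=> //; split=> // j /andP[/leq_trans h/h]; rewrite ltnn.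
exists i; split; first exact: leqW.
split=> // j /andP[ij]; rewrite leq_eqVlt => /orP[/eqP -> //|jN].
by apply: abeq'; rewrite ij.
Qed.

Lemma lex_lt_mono n a a' b b' : (forall i, a' i <= a i) -> (forall i, b i <= b' i) ->
  lex_lt n a b -> lex_lt n a' b'.
Proof.
move=> a'a bb'; elim: n => [|n IH].
  by rewrite !lex_lt0 => ab; apply: leq_ltn_trans (a'a 0) (leq_trans ab (bb' 0)).
rewrite !lex_ltS => -[ab|[abeq /IH lt]].
  by left; apply: leq_ltn_trans (a'a _) (leq_trans ab (bb' _)).
case: (ltngtP (a' n.+1) (b' n.+1)) => [|b'a'|->]; [by left| |by right].
by have := leq_ltn_trans (bb' _) (leq_trans b'a' (a'a _)); rewrite abeq ltnn.
Qed.

Section Rankings.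
Variable V : finType.
Implicit Types (E : {fset form V}) (G : {fset default V}) (f a b : form V).
Implicit Types (w v u : world V) (U W : wseq V) (r : world V -> nat).

Lemma modelsP E f :
  reflect (forall w, {in E, forall e, sat w e} -> sat w f) (models E f).
Proof.
apply: (iffP forallP) => [H w Ew|H w]; first by move/implyP: (H w); apply; apply/allP.
by apply/implyP => /allP; apply: H.
Qed.

Lemma consistentP E : reflect (exists w, {in E, forall e, sat w e}) (consistent E).
Proof.
apply: (iffP negP) => [nE|[w Ew] /modelsP /(_ w Ew) //].
by apply: NNPP => nw; apply: nE; apply/modelsP => w Ew; case: nw; exists w.
Qed.

Lemma sat_fsetU1 E f w :
  {in E `|` [fset f], forall e, sat w e} <-> {in E, forall e, sat w e} /\ sat w f.
Proof.
split=> [Efw|[Ew fw] e /[!in_fsetU] /orP[/Ew //|/[!inE] /eqP -> //]].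
by split=> [e eE|]; apply: Efw; rewrite !inE ?eE ?eqxx ?orbT.
Qed.

Lemma consistentU1P E f :
  reflect (exists w, {in E, forall e, sat w e} /\ sat w f) (consistent (E `|` [fset f])).
Proof.
by apply: (iffP (consistentP _)) => -[w /sat_fsetU1 Efw]; exists w.
Qed.

Lemma consistent1P f : reflect (exists w, sat w f) (consistent [fset f]).
Proof.
apply: (iffP (consistentP _)) => [[w Ew]|[w fw]]; exists w; last by move=> e /[!inE] /eqP ->.
by apply: Ew; rewrite inE.
Qed.

Lemma validPn f : reflect (exists w, ~~ sat w f) (~~ valid f).
Proof.
apply: (iffP negP) => [nf|[w nw] /modelsP /(_ w) fw]; last by rewrite fw in nw.
apply: NNPP => H; apply: nf; apply/modelsP => w _.
by apply: NNPP => /negP nw; apply: H; exists w.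
Qed.

Lemma mem_imps G d : d \in G -> Imp d.1 d.2 \in imps G.
Proof. by move=> dG; apply/imfsetP; exists d. Qed.

Lemma card_imps G : #|` imps G| = #|` G|.
Proof. by rewrite card_imfset //= => -[a b] [c d] [-> ->]. Qed.

Definition ranked r : erel V := fun a b =>
  forall v, ~~ sat v b -> exists2 w, ~~ sat w a & r w <= r v.

Definition same_order r r' := forall w v, (r w <= r v) = (r' w <= r' v).

Lemma ranked_same_order r r' : same_order r r' -> same_rel (ranked r) (ranked r').
Proof.
move=> rr' a b; split=> ab v bv; have [w aw le] := ab v bv; exists w => //.
  by rewrite -rr'.
by rewrite rr'.
Qed.

Lemma eq_ranked r r' : r =1 r' -> same_rel (ranked r) (ranked r').
Proof. by move=> rr'; apply: ranked_same_order => w v; rewrite !rr'. Qed.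

Lemma ranked_Top_Bot r : ~ ranked r (Top V) (Bot V).
Proof. by move=> /(_ [ffun=> true] isT) []. Qed.

Definition literal w x : form V := if w x then Var x else Neg (Var x).

Definition char_form w : form V :=
  foldr (fun x f => And (literal w x) f) (Top V) (enum V).

Lemma sat_char_form u w : sat u (char_form w) = (u == w).
Proof.
have -> : sat u (char_form w) = all (fun x => u x == w x) (enum V).
  rewrite /char_form; elim: (enum V) => //= x s ->.
  by rewrite /literal; case: (w x) => /=; case: (u x).
apply/allP/eqP => [uw|-> //]; apply/ffunP => x; apply/eqP/uw; exact: mem_enum.
Qed.

Lemma ranked_char_form r w v :
  ranked r (Neg (char_form w)) (Neg (char_form v)) <-> r w <= r v.
Proof.
split=> [/(_ v)|le u].
  rewrite /= sat_char_form negbK eqxx => /(_ isT) [u].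
  by rewrite /= sat_char_form negbK => /eqP ->.
by rewrite /= sat_char_form negbK => /eqP ->; exists w; rewrite //= sat_char_form negbK.
Qed.

Lemma same_order_ranked r r' : same_rel (ranked r) (ranked r') -> same_order r r'.
Proof. by move=> rr' w v; apply/idP/idP => /ranked_char_form/rr'/ranked_char_form. Qed.

Lemma same_order_mixed r1 r1' r2 r2' N1 N1' :
  (forall w, r1 w < N1) -> (forall w, r1' w < N1') ->
  same_order r1 r1' -> same_order r2 r2' ->
  same_order (fun w => r2 w * N1 + r1 w) (fun w => r2' w * N1' + r1' w).
Proof.
move=> r1N r1N' r11 r22 w v; rewrite [LHS]leqNgt [RHS]leqNgt !ltn_mixed_radix //.
by rewrite !ltnNge eqn_leq [in RHS]eqn_leq !r11 !r22.
Qed.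

Lemma Bel_ranked R r f : same_rel R (ranked r) ->
  Bel R f <-> forall w, (forall u, r w <= r u) -> sat w f.
Proof.
move=> Rr.
have strictE g : strict R (Bot V) g <-> exists v, forall w, ~~ sat w g -> r v < r w.
  rewrite /strict !Rr; split=> [[_ gBot]|[v gv]].
    apply: NNPP => nomin; apply: gBot => v _; apply: NNPP => nv; apply: nomin.
    by exists v => w gw; rewrite ltnNge; apply/negP => wv; apply: nv; exists w.
  split=> [u _|/(_ v isT) [w /gv]]; first by exists u.
  by rewrite ltnNge => /negP.
rewrite /Bel strictE; split=> [fBel w wmin|fmin _].
  case: fBel => [|v vf]; first by exists (Top V); apply/strictE; exists [ffun=> true].
  by apply: contraT => /vf; rewrite ltnNge wmin.
case: (arg_minnP r (isT : predT [ffun=> true])) => v _ vmin.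
exists v => w; apply: contraR; rewrite -leqNgt => wv; apply: fmin => u.
by apply: leq_trans wv (vmin u isT).
Qed.

(** * Sequences of worlds *)

(* [level U w = size U] when no block of [U] contains [w]. *)
Definition level U w := find (fun X : {set world V} => w \in X) U.

Lemma mem_bigcup_level U w : (w \in (\bigcup_(X <- U) X)%SET) = (level U w < size U).
Proof. by rewrite -has_find; elim: U => [|X U IH]; rewrite ?big_nil ?big_cons ?inE ?IH. Qed.

Lemma fullP U : reflect (forall w, level U w < size U) (full U).
Proof.
apply: (iffP eqP) => [UT w|Ucov]; first by rewrite -mem_bigcup_level UT inE.
by apply/setP => w; rewrite mem_bigcup_level Ucov inE.
Qed.

Lemma wempty_level U : wempty U -> forall w, size U <= level U w.
Proof. by move=> /eqP U0 w; rewrite leqNgt -mem_bigcup_level U0 inE. Qed.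

Lemma eq_rank U f g : (forall w, sat w f = sat w g) -> rank U f = rank U g.
Proof. by move=> fg; rewrite /rank; have -> : Sf f = Sf g by apply/setP => w; rewrite !inE. Qed.

Lemma rank_Some U f k : rank U f = Some k ->
  (exists2 w, sat w f & level U w = k) /\ (forall w, sat w f -> k <= level U w).
Proof.
rewrite /rank; case: ifP => // Uf [<-].
have kmin w : sat w f -> find (fun X => X :&: Sf f != set0) U <= level U w.
  by move=> fw; apply: sub_find => X /= Xw; apply/set0Pn; exists w; rewrite !inE Xw.
split=> //; have /set0Pn [w /setIP [wX]] := nth_find set0 Uf; rewrite inE => fw.
by exists w => //; apply/eqP; rewrite eqn_leq kmin // (find_leq_nth wX).
Qed.

Lemma rank_None U f :
  (forall w, level U w < size U) -> rank U f = None <-> forall w, ~~ sat w f.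
Proof.
move=> Ucov; rewrite /rank; case: hasP => [[X _ /set0Pn [w /setIP [_]]]|nU].
  by rewrite inE => fw; split=> // /(_ w); rewrite fw.
split=> // _ w; apply/negP => fw; apply: nU; exists (nth set0 U (level U w)).
  exact: mem_nth (Ucov w).
have wU : has (fun X : {set world V} => w \in X) U by rewrite has_find; exact: Ucov.
by apply/set0Pn; exists w; rewrite !inE fw andbT; move: (nth_find set0 wU).
Qed.

Lemma ltr_inf_irr (x : option nat) : ltr_inf x x = false.
Proof. by case: x => //= k; rewrite ltnn. Qed.

Lemma ltr_inf_rank U f g : (forall w, level U w < size U) ->
  ltr_inf (rank U f) (rank U g) <->
  exists2 w, sat w f & forall v, sat v g -> level U w < level U v.
Proof.
move=> Ucov; case Ef: (rank U f) => [k|]; last first.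
  by split=> // -[w fw _]; move/(rank_None _ Ucov): Ef => /(_ w); rewrite fw.
have [[wf fwf <-] kmin] := rank_Some Ef.
case Eg: (rank U g) => [l|] /=.
  have [[u gu <-] lmin] := rank_Some Eg.
  split=> [lt|[w fw wmin]]; first by exists wf => // v /lmin; apply: leq_trans.
  by apply: leq_ltn_trans (kmin _ fw) (wmin _ gu).
split=> // _; exists wf => // v gv.
by move/(rank_None _ Ucov): Eg => /(_ v); rewrite gv.
Qed.

Lemma prec_seq_ranked U :
  (forall w, level U w < size U) -> same_rel (prec_seq U) (ranked (level U)).
Proof.
move=> Ucov a b; rewrite /prec_seq /nm.
rewrite (@eq_rank _ (And _ (Neg a)) (Neg a)) => [|w /=]; last by case: (sat w a); rewrite ?andbF.
rewrite (@eq_rank _ (And _ (Neg (Bot V))) (Neg b)) => [|w /=]; last by rewrite andbT.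
rewrite ltr_inf_irr !rank_None // ltr_inf_rank //=.
split=> [[nab v bv|[//|bT v bv]]|ab].
- apply: NNPP => vmin; apply: nab; left; exists v; first by rewrite bv orbT.
  by move=> u au; rewrite ltnNge; apply/negP => uv; apply: vmin; exists u.
- by move: (bT v); rewrite bv.
have [bT|nbT] := classic (forall w, sat w b); [right; right=> w; exact/negPn|left].
move=> [[w /orP[aw|bw] wmin]|nab]; first by have := wmin w aw; rewrite ltnn.
  by have [u /wmin] := ab w bw; rewrite ltnNge => /negP.
by apply: nbT => w; move: (nab w); rewrite negb_or !negbK => /andP[].
Qed.

Lemma prec_seq_uncovered U :
  (forall w, size U <= level U w) -> forall a b, prec_seq U a b.
Proof.
move=> Uunc a b; right; right; rewrite /rank; case: hasP => // -[X XU /set0Pn [w /setIP [wX _]]].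
by move: (Uunc w); rewrite leqNgt -has_find => /hasP; case; exists X.
Qed.

Definition ranked_seq r N : wseq V := [seq [set w | r w == i] | i <- iota 0 N].

Lemma size_ranked_seq r N : size (ranked_seq r N) = N.
Proof. by rewrite size_map size_iota. Qed.

Lemma level_ranked_seq r N w : r w < N -> level (ranked_seq r N) w = r w.
Proof.
move=> rwN; rewrite /level find_map (@eq_find _ _ (pred1 (r w))) => [|i]; last first.
  by rewrite /= inE eq_sym.
have := index_uniq 0 (_ : r w < size (iota 0 N)) (iota_uniq 0 N).
by rewrite nth_iota // size_iota; apply.
Qed.

Lemma full_ranked_seq r N : (forall w, r w < N) -> full (ranked_seq r N).
Proof. by move=> rN; apply/fullP => w; rewrite size_ranked_seq level_ranked_seq. Qed.

Lemma prec_seq_ranked_seq r N :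
  (forall w, r w < N) -> same_rel (prec_seq (ranked_seq r N)) (ranked r).
Proof.
move=> rN a b; rewrite prec_seq_ranked; last exact/fullP/full_ranked_seq.
by apply: eq_ranked => w; rewrite level_ranked_seq.
Qed.

Lemma Upsilon_ranked_seq r N : (forall w, r w < N) -> Upsilon (ranked_seq r N).
Proof.
move=> rN; split; first by rewrite size_ranked_seq (leq_ltn_trans _ (rN [ffun=> true])).
split; last by rewrite full_ranked_seq.
move=> i j; rewrite size_ranked_seq => iN jN ij; rewrite !(nth_map 0) ?size_iota //.
by rewrite !nth_iota // disjoints_subset; apply/subsetP => w; rewrite !inE => /eqP ->.
Qed.

Lemma level_seq_rev U W w : full U -> level W w < size W ->
  level (seq_rev U W) w < size (seq_rev U W) /\
  level (seq_rev U W) w = level W w * size U + level U w.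
Proof.
move=> Ufull; have := fullP _ Ufull w; rewrite /seq_rev Ufull /level -!has_find.
move=> Uw; elim: W => //= Y W IH; rewrite find_cat has_cat !has_map /= size_map.
case Yw: (w \in Y) => /= Ww; case: hasP => [[X _ /= XYw]|nUY] /=.
- by rewrite find_map; split=> //; apply: eq_find => Z /=; rewrite inE Yw andbT.
- by case: nUY; have [X XU Xw] := hasP Uw; exists X; rewrite //= inE Xw Yw.
- by rewrite inE Yw andbF in XYw.
by have [-> ->] := IH Ww; rewrite mulSn addnA.
Qed.

Lemma prec_seq_rev U W : full U -> (forall w, level W w < size W) ->
  same_rel (prec_seq (seq_rev U W)) (ranked (fun w => level W w * size U + level U w)).
Proof.
move=> Ufull Wcov a b; have revw w := level_seq_rev Ufull (Wcov w).
rewrite prec_seq_ranked => [|w]; last by case: (revw w).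
by apply: eq_ranked => w; case: (revw w).
Qed.

Lemma Upsilon_ranked U r : Upsilon U -> same_rel (prec_seq U) (ranked r) ->
  full U /\ same_order (level U) r.
Proof.
move=> [_ [_ /orP[Ufull|/wempty_level Uunc]]] Ur; last first.
  by case: (@ranked_Top_Bot r); apply/Ur/(prec_seq_uncovered Uunc).
split=> //; apply: same_order_ranked => a b; rewrite -prec_seq_ranked //; exact/fullP.
Qed.

Lemma Erev_ranked R1 R2 r1 r2 N1 N2 :
  (forall w, r1 w < N1) -> (forall w, r2 w < N2) ->
  same_rel R1 (ranked r1) -> same_rel R2 (ranked r2) ->
  same_rel (Erev R1 R2) (ranked (fun w => r2 w * N1 + r1 w)).
Proof.
move=> r1N r2N R1r R2r a b; split.
  case=> U [W [UU [UW [UR1 [WR2 UWab]]]]].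
  have [Ufull Ur1] := Upsilon_ranked UU (fun x y => iff_trans (UR1 x y) (R1r x y)).
  have [Wfull Wr2] := Upsilon_ranked UW (fun x y => iff_trans (WR2 x y) (R2r x y)).
  have Ucov := fullP _ Ufull; have Wcov := fullP _ Wfull.
  by apply/(ranked_same_order (same_order_mixed Ucov r1N Ur1 Wr2))/prec_seq_rev.
move=> ab; exists (ranked_seq r1 N1), (ranked_seq r2 N2).
split; first exact: Upsilon_ranked_seq.
split; first exact: Upsilon_ranked_seq.
split; first by move=> x y; rewrite prec_seq_ranked_seq // R1r.
split; first by move=> x y; rewrite prec_seq_ranked_seq // R2r.
have levelE w : level (ranked_seq r2 N2) w * size (ranked_seq r1 N1)
                 + level (ranked_seq r1 N1) w = r2 w * N1 + r1 w.
  by rewrite size_ranked_seq !level_ranked_seq.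
apply/prec_seq_rev/(eq_ranked levelE) => //; first exact: full_ranked_seq.
exact/fullP/full_ranked_seq.
Qed.

Lemma Erev_total R1 R2 r1 N1 :
  (forall w, r1 w < N1) -> same_rel R1 (ranked r1) -> (forall a b, R2 a b) ->
  forall a b, Erev R1 R2 a b.
Proof.
move=> r1N R1r R2T a b; pose W0 : wseq V := [:: set0]; exists (ranked_seq r1 N1), W0.
have W0_uncovered w : size W0 <= level W0 w by rewrite /level /= inE.
split; first exact: Upsilon_ranked_seq.
split; first by split=> //; split=> [[|i] [|j] //|]; rewrite /wempty big_seq1 eqxx orbT.
split; first by move=> x y; rewrite prec_seq_ranked_seq // R1r.
split; first by move=> x y; split=> _; [exact: R2T|exact: (prec_seq_uncovered W0_uncovered)].
apply: prec_seq_uncovered => w; rewrite /seq_rev full_ranked_seq //= cats0 leqNgt -has_find.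
by rewrite has_map; apply/hasPn => X _ /=; rewrite setI0 in_set0.
Qed.

(** * The relation generated by a finite set of formulas *)

Definition satisfied E w : {fset form V} := [fset e in E | sat w e].

Definition violations E w := #|` E| - #|` satisfied E w|.

Lemma satisfied_sub E w : satisfied E w `<=` E.
Proof. exact: fset_sub. Qed.

Lemma sat_satisfied E w : {in satisfied E w, forall e, sat w e}.
Proof. by move=> e; rewrite !inE => /andP[]. Qed.

Lemma leq_card_satisfied E E' w :
  E' `<=` E -> {in E', forall e, sat w e} -> #|` E'| <= #|` satisfied E w|.
Proof.
move=> /fsubsetP E'E E'w; apply/fsubset_leq_card/fsubsetP => e eE'.
by rewrite !inE E'E ?E'w.
Qed.

Lemma violations_lt E w : violations E w < #|` E|.+1.
Proof. by rewrite ltnS leq_subr. Qed.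

Lemma leq_violations E w v :
  (violations E w <= violations E v) = (#|` satisfied E v| <= #|` satisfied E w|).
Proof. by rewrite /violations leq_sub2lE // fsubset_leq_card // satisfied_sub. Qed.

Lemma ltn_violations E w v :
  (violations E w < violations E v) = (#|` satisfied E v| < #|` satisfied E w|).
Proof. by rewrite !ltnNge leq_violations. Qed.

Lemma eqn_violations E w v :
  (violations E w == violations E v) = (#|` satisfied E w| == #|` satisfied E v|).
Proof. by rewrite !eqn_leq !leq_violations andbC. Qed.

Lemma violations1 f w : violations [fset f] w = ~~ sat w f.
Proof.
rewrite /violations cardfs1; case fw: (sat w f).
  have -> : satisfied [fset f] w = [fset f].
    by apply/fsetP => e; rewrite !inE; case: eqP => // ->; rewrite fw.
  by rewrite cardfs1.
have -> : satisfied [fset f] w = fset0.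
  by apply/fsetP => e; rewrite !inE; case: eqP => // ->; rewrite fw.
by rewrite cardfs0.
Qed.

Lemma prec_gen_ranked E : consistent E -> same_rel (prec_gen E) (ranked (violations E)).
Proof.
move=> Econs a b; split=> [nab v bv|ab [_ [/validPn [v0 bv0] larger]]].
  apply: NNPP => vmin; apply: nab; split=> //; split; first by apply/validPn; exists v.
  move=> E' E'E /consistentU1P [w [E'w aw]]; exists (satisfied E v); first exact: satisfied_sub.
  split; last by apply/consistentU1P; exists v; split=> //; exact: sat_satisfied.
  apply: leq_ltn_trans (leq_card_satisfied E'E E'w) _; rewrite ltnNge -leq_violations.
  by apply/negP => wv; apply: vmin; exists w.
pose card_sat w := #|` satisfied E w|.
case: (@arg_maxnP _ v0 (fun u => ~~ sat u b) card_sat bv0) => v bv vmax.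
have [w aw] := ab v bv; rewrite leq_violations => vw.
have [|E'' E''E [wE'' /consistentU1P [u [E''u bu]]]] := larger _ (satisfied_sub E w).
  by apply/consistentU1P; exists w; split=> //; exact: sat_satisfied.
have uv : #|` satisfied E u| <= #|` satisfied E v| := vmax u bu.
have := leq_card_satisfied E''E E''u.
by rewrite leqNgt (leq_ltn_trans (leq_trans uv vw) wE'').
Qed.

Lemma prec_gen_inconsistent E : ~~ consistent E -> forall a b, prec_gen E a b.
Proof. by move=> /negP Eincons a b [Econs _]. Qed.

End Rankings.

(** * The Z-partition and the lexicographic closure *)

Section ZPartition.
Variables (V : finType) (D : {fset default V}).
Implicit Types (G : {fset default V}) (w v u : world V).

Definition zimps i := imps (zlayer D i).

Fixpoint zradix m := if m is m'.+1 then #|` zimps m'|.+1 * zradix m' else 1.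

Fixpoint zkey m w :=
  if m is m'.+1 then violations (zimps m') w * zradix m' + zkey m' w else 0.

Lemma zkeyS m w : zkey m.+1 w = violations (zimps m) w * zradix m + zkey m w.
Proof. by []. Qed.

Lemma zkey_lt m w : zkey m w < zradix m.
Proof.
elim: m => //= m IH; rewrite mulSn addnC -addSn leq_add // leq_mul //.
by rewrite -ltnS violations_lt.
Qed.

Lemma zlayer_sub i : zlayer D i `<=` D.
Proof.
apply: fsubset_trans (fset_sub _ _) _.
by elim: i => //= i IH; apply: fsubset_trans (fsubsetDl _ _) IH.
Qed.

Lemma consistent_zimps i : consistent (imps D) -> consistent (zimps i).
Proof.
move=> /consistentP [w Dw]; apply/consistentP; exists w => _ /imfsetP [d dL ->].
by apply/Dw/mem_imps/(fsubsetP (zlayer_sub i)).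
Qed.

Lemma zrev_ranked m : consistent (imps D) ->
  same_rel (foldl (fun R i => Erev R (prec_gen (zimps i))) (prec_gen fset0) (iota 0 m))
           (ranked (zkey m)).
Proof.
move=> Dcons; elim: m => [|m IH].
  have fset0_cons : consistent (fset0 : {fset form V}).
    by apply/consistentP; exists [ffun=> true] => e; rewrite inE.
  move=> a b; rewrite /= (prec_gen_ranked fset0_cons).
  by apply: eq_ranked => w; rewrite /violations cardfs0.
have -> : iota 0 m.+1 = rcons (iota 0 m) m by rewrite -addn1 iotaD cats1.
rewrite foldl_rcons.
exact: Erev_ranked (@zkey_lt m) (@violations_lt _ _) IH
                   (prec_gen_ranked (consistent_zimps m Dcons)).
Qed.

Definition zcount w i := #|` satisfied (zimps i) w|.

Lemma zkey_ltP m v w : zkey m.+1 v < zkey m.+1 w <-> lex_lt m (zcount w) (zcount v).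
Proof.
elim: m => [|m IH]; first by rewrite lex_lt0 /= !muln1 !addn0 ltn_violations.
rewrite lex_ltS (zkeyS m.+1 v) (zkeyS m.+1 w) ltn_mixed_radix ?zkey_lt //.
rewrite ltn_violations eqn_violations eq_sym.
split=> [/orP[lt|/andP[/eqP eq /IH lt]]|[lt|[eq /IH lt]]]; [by left|by right|by rewrite lt|].
by apply/orP; right; apply/andP; split; first exact/eqP.
Qed.

Definition sat_defaults w : {fset default V} := [fset d in D | sat w (Imp d.1 d.2)].

Lemma sat_defaults_sub w : sat_defaults w `<=` D.
Proof. exact: fset_sub. Qed.

Lemma sat_imps_sat_defaults w : {in imps (sat_defaults w), forall e, sat w e}.
Proof. by move=> _ /imfsetP [d /[!inE] /andP[_ dw] ->]. Qed.

Lemma leq_card_zlayer G w i :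
  {in imps G, forall e, sat w e} -> #|` G `&` zlayer D i| <= zcount w i.
Proof.
move=> Gw; rewrite -card_imps.
apply: leq_card_satisfied => [|_ /imfsetP [d /[!in_fsetI] /andP[dG _] ->]].
  by apply/fsubsetP => _ /imfsetP [d /[!in_fsetI] /andP[_ dL] ->]; exact: mem_imps.
by apply: Gw; exact: mem_imps.
Qed.

Lemma zcount_leq_sat_defaults w i : zcount w i <= #|` sat_defaults w `&` zlayer D i|.
Proof.
rewrite -card_imps; apply/fsubset_leq_card/fsubsetP => _ /[!inE] /andP[/imfsetP [d dL ->] dw].
by apply: mem_imps; rewrite in_fsetI dL andbT !inE dw andbT (fsubsetP (zlayer_sub i)).
Qed.

Section LexicographicClosure.
Variables (n : nat) (theta : form V).

Definition lex_rank w := violations [fset theta] w * zradix n.+1 + zkey n.+1 w.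

Lemma lex_rank_sat w : sat w theta -> lex_rank w = zkey n.+1 w.
Proof. by move=> tw; rewrite /lex_rank violations1 tw. Qed.

Lemma lex_rank_ltP v w : sat v theta -> sat w theta ->
  lex_rank v < lex_rank w <-> lex_lt n (zcount w) (zcount v).
Proof. by move=> tv tw; rewrite !lex_rank_sat // zkey_ltP. Qed.

Lemma lex_rank_min_sat w :
  consistent [fset theta] -> (forall u, lex_rank w <= lex_rank u) -> sat w theta.
Proof.
move=> /consistent1P [t tt] wmin; apply: contraT => nw; have := wmin t.
rewrite (lex_rank_sat tt) /lex_rank violations1 nw mul1n leqNgt.
by rewrite (leq_trans (zkey_lt n.+1 t)) ?leq_addr.
Qed.

Definition lex_maximal G := forall G', G' `<=` D ->
  consistent (imps G' `|` [fset theta]) -> ~ lexlt D n G G'.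

Lemma lex_maximal_sat_defaults w : consistent [fset theta] ->
  (forall u, lex_rank w <= lex_rank u) -> lex_maximal (sat_defaults w).
Proof.
move=> tcons wmin G' _ /consistentU1P [u [G'u tu]] wG'.
have tw := lex_rank_min_sat tcons wmin.
have : lex_rank u < lex_rank w.
  apply/(lex_rank_ltP tu tw)/(lex_lt_mono _ _ wG') => i.
    exact: zcount_leq_sat_defaults.
  exact: leq_card_zlayer.
by rewrite ltnNge wmin.
Qed.

Lemma lex_maximal_rank_min G w : lex_maximal G ->
  {in imps G, forall e, sat w e} -> sat w theta -> forall u, lex_rank w <= lex_rank u.
Proof.
move=> Gmax Gw tw u; rewrite leqNgt; apply/negP => uw.
have tu : sat u theta.
  apply: contraLR uw => nu; rewrite -leqNgt lex_rank_sat // /lex_rank violations1 nu mul1n.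
  exact: leq_trans (ltnW (zkey_lt n.+1 w)) (leq_addr _ _).
apply: (Gmax _ (sat_defaults_sub u)).
  by apply/consistentU1P; exists u; split=> //; exact: sat_imps_sat_defaults.
apply: (lex_lt_mono _ _ (proj1 (lex_rank_ltP tu tw) uw)) => i.
  exact: leq_card_zlayer.
exact: zcount_leq_sat_defaults.
Qed.

End LexicographicClosure.
End ZPartition.

Theorem corollary1 (V : finType) (D : {fset default V}) (n : nat) :
  consistent (imps D) ->
  is_zpartition D n ->
  forall theta phi : form V,
    lex_entails D n theta phi <->
    Bel (Erev (zrev D n) (prec_gen [fset theta])) phi.
Proof.
move=> Dcons _ theta phi.
have zrevr : same_rel (zrev D n) (ranked (zkey D n.+1)) := zrev_ranked n.+1 Dcons.
have [tcons|tincons] := boolP (consistent [fset theta]); last first.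
  have revT := Erev_total (zkey_lt D n.+1) zrevr (prec_gen_inconsistent tincons).
  split=> _; first by move=> [psi [_ []]]; exact: revT.
  by move=> G _ /consistentU1P [w [_ tw]]; case/negP: tincons; apply/consistent1P; exists w.
have revr : same_rel (Erev (zrev D n) (prec_gen [fset theta])) (ranked (lex_rank D n theta)).
  exact: Erev_ranked (zkey_lt D n.+1) (@violations_lt _ _) zrevr (prec_gen_ranked tcons).
rewrite (Bel_ranked _ revr); split=> [lexe w wmin|phimin G _ _ Gmax].
  have tw := lex_rank_min_sat tcons wmin.
  have wcons : consistent (imps (sat_defaults D w) `|` [fset theta]).
    by apply/consistentU1P; exists w; split=> //; exact: sat_imps_sat_defaults.
  move/modelsP: (lexe _ (sat_defaults_sub D w) wcons (lex_maximal_sat_defaults tcons wmin)).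
  by apply; apply/sat_fsetU1; split=> //; exact: sat_imps_sat_defaults.
apply/modelsP => w /sat_fsetU1 [Gw tw]; exact/phimin/(lex_maximal_rank_min Gmax Gw tw).
Qed.
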